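(* Let $L$ be a post-Lie-Rinehart algebra over $R$, with anchor map $\rho$ and connection $\rhd$. Then $E\ell_R(L)$ is a subalgebra of the algebra (under composition) generated by $\{\delta X,\tilde{\delta}X : X\in L\}$.
   Context: Let $R$ be a commutative unital algebra. A Lie-Rinehart algebra over $R$ is an $R$-module $L$ with a Lie bracket $\llbracket\cdot,\cdot\rrbracket$ and an $R$-linear Lie algebra morphism $\rho:L\to\mathrm{Der}(R)$ (the anchor) such that $\llbracket X,fY\rrbracket=(\rho(X)f)Y+f\llbracket X,Y\rrbracket$ for $f\in R$ and $X,Y\in L$. A connection is a map $L\times L\to L$, $(X,Y)\mapsto X\rhd Y$, that is $R$-linear in $X$ and satisfies $X\rhd(fY)=(\rho(X)f)Y+f\,X\rhd Y$. Its torsion is $T(X,Y)=X\rhd Y-Y\rhd X-\llbracket X,Y\rrbracket$ and its curvature is $\mathcal{R}(X,Y,Z)=X\rhd(Y\rhd Z)-Y\rhd(X\rhd Z)-\llbracket X,Y\rrbracket\rhd Z$. A post-Lie-Rinehart algebra is a Lie-Rinehart algebra with a connection that is flat ($\mathcal{R}=0$) and has constant torsion ($X\rhd T(Y,Z)=T(X\rhd Y,Z)+T(Y,X\rhd Z)$). Put $[X,Y]:=-T(X,Y)$; then $(L,[\cdot,\cdot],\rhd)$ is a post-Lie algebra. The connection extends to $\mathrm{Hom}_R(L)$ by $(X\rhd u)(Y)=X\rhd u(Y)-u(X\rhd Y)$. For $X\in L$ define $\delta X\in\mathrm{Hom}_R(L)$ by $\delta X(Z)=Z\rhd X$, and $\tilde\delta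 X$ by $\tilde\delta X(Z)=Z\rhd X+[Z,X]$. $E\ell_R(L)$, the algebra of elementary $R$-module endomorphisms, is the $R$-module subalgebra of $\mathrm{Hom}_R(L)$ (with composition as product) generated by the elements $Y_1\rhd(Y_2\rhd(\cdots(Y_n\rhd\delta X)\cdots))$ with $n\ge 0$ and $X,Y_1,\dots,Y_n\in L$. *)

From HB Require Import structures.
From mathcomp Require Import all_boot all_order all_algebra.
Set Implicit Arguments. Unset Strict Implicit. Unset Printing Implicit Defensive.
Import GRing.Theory.
Local Open Scope ring_scope.

Section PostLieRinehart.
Variables (k : fieldType) (R : comAlgType k) (L : lmodType R).
Variables (lb : L -> L -> L) (rho : L -> R -> R) (conn : L -> L -> L).

Definition kscale (a : k) (X : L) : L := (a%:A : R) *: X.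

Definition is_LieRinehart : Prop :=
  (forall a X Y Z, lb (kscale a X + Y) Z = kscale a (lb X Z) + lb Y Z) /\
      (forall a X Y Z, lb X (kscale a Y + Z) = kscale a (lb X Y) + lb X Z) /\
      (forall X, lb X X = 0) /\
      (forall X Y Z, lb X (lb Y Z) + lb Y (lb Z X) + lb Z (lb X Y) = 0) /\
      (forall X (a : k) f g, rho X (a *: f + g) = a *: rho X f + rho X g) /\
      (forall X f g, rho X (f * g) = rho X f * g + f * rho X g) /\
      (forall f X Y g, rho (f *: X + Y) g = f * rho X g + rho Y g) /\
      (forall X Y g, rho (lb X Y) g = rho X (rho Y g) - rho Y (rho X g)) /\
      (forall X f Y, lb X (f *: Y) = rho X f *: Y + f *: lb X Y).

Definition is_connection : Prop :=
  [/\ (forall f X Y Z, conn (f *: X + Y) Z = f *: conn X Z + conn Y Z),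
      (forall X Y Z, conn X (Y + Z) = conn X Y + conn X Z) &
      (forall X f Y, conn X (f *: Y) = rho X f *: Y + f *: conn X Y)].

Definition torsion (X Y : L) : L := conn X Y - conn Y X - lb X Y.

Definition curvature (X Y Z : L) : L :=
  conn X (conn Y Z) - conn Y (conn X Z) - conn (lb X Y) Z.

Definition is_postLieRinehart : Prop :=
  [/\ is_LieRinehart, is_connection,
      (forall X Y Z, curvature X Y Z = 0) &
      (forall X Y Z, conn X (torsion Y Z) = torsion (conn X Y) Z + torsion Y (conn X Z))].

Definition plbr (X Y : L) : L := - torsion X Y.

(* extension of the connection to endomorphisms of L *)
Definition connHom (X : L) (u : L -> L) : L -> L :=
  fun Y => conn X (u Y) - u (conn X Y).

Definition delta (X : L) : L -> L := fun Z => conn Z X.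
Definition delta_tilde (X : L) : L -> L := fun Z => conn Z X + plbr Z X.

End PostLieRinehart.

Inductive gen_alg (R : comRingType) (L : lmodType R) (S : (L -> L) -> Prop)
  : (L -> L) -> Prop :=
| ga_gen u : S u -> gen_alg S u
| ga_zero : gen_alg S (fun _ => 0)
| ga_add u v : gen_alg S u -> gen_alg S v -> gen_alg S (fun Z => u Z + v Z)
| ga_scale (f : R) u : gen_alg S u -> gen_alg S (fun Z => f *: u Z)
| ga_comp u v : gen_alg S u -> gen_alg S v -> gen_alg S (fun Z => u (v Z)).

(* generators of El_R(L): Y1 |> (Y2 |> ( ... (Yn |> delta X))) *)
Definition El_gens (k : fieldType) (R : comAlgType k) (L : lmodType R)
  (conn : L -> L -> L) (u : L -> L) : Prop :=
  exists (X : L) (Ys : seq L),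
    u = foldr (fun Y v => connHom conn Y v) (delta conn X) Ys.

Definition El (k : fieldType) (R : comAlgType k) (L : lmodType R)
  (conn : L -> L -> L) : (L -> L) -> Prop := gen_alg (El_gens conn).

Definition delta_gens (k : fieldType) (R : comAlgType k) (L : lmodType R)
  (lb conn : L -> L -> L) (u : L -> L) : Prop :=
  exists X : L, u = delta conn X \/ u = delta_tilde lb conn X.

From mathcomp Require Import all_boot all_order all_algebra.
From Stdlib Require Import FunctionalExtensionality.
Set Implicit Arguments. Unset Strict Implicit. Unset Printing Implicit Defensive.
Import GRing.Theory.
Local Open Scope ring_scope.

(* The generators of El_R(L) are the iterated covariant derivatives of the
   delta X, so it suffices that the algebra generated by delta and
   delta_tilde is stable under u |-> X |> u.  This operator obeys the Leibniz
   rule for R-scalings and for composition (the latter as soon as the outer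
   factor is additive, which every element generated by delta and delta_tilde
   is), so stability reduces to the generators.  There, flatness and constant
   torsion give
     X |> delta Y       = delta (X |> Y)       - delta Y o delta_tilde X,
     X |> delta_tilde Y = delta_tilde (X |> Y) - delta Y o delta_tilde X. *)

Section GeneratedAlgebra.
Variables (R : comNzRingType) (L : lmodType R).
Implicit Types (S T : (L -> L) -> Prop) (u v : L -> L).

Lemma gen_alg_eq S u v : u =1 v -> gen_alg S v -> gen_alg S u.
Proof. by move=> /functional_extensionality ->. Qed.

Lemma gen_alg_B S u v :
  gen_alg S u -> gen_alg S v -> gen_alg S (fun Z => u Z - v Z).
Proof.
move=> Su Sv; apply: (gen_alg_eq _ (ga_add Su (ga_scale (-1) Sv))) => Z.
by rewrite scaleN1r.
Qed.

Lemma gen_alg_min S T :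
  (forall u, S u -> gen_alg T u) -> forall u, gen_alg S u -> gen_alg T u.
Proof.
move=> ST u; elim=> {u} [u /ST //| | u v _ Tu _ Tv | f u _ Tu | u v _ Tu _ Tv].
- exact: ga_zero.
- exact: ga_add.
- exact: ga_scale.
- exact: ga_comp.
Qed.

Lemma gen_alg_morphB S :
  (forall u, S u -> {morph u : a b / a - b}) ->
  forall u, gen_alg S u -> {morph u : a b / a - b}.
Proof.
move=> SB u; elim=> {u} [u /SB //| | u v _ uB _ vB | f u _ uB | u v _ uB _ vB] a b.
- by rewrite subr0.
- by rewrite uB vB addrACA opprD.
- by rewrite uB scalerBr.
- by rewrite vB uB.
Qed.

End GeneratedAlgebra.

Section CovariantDerivativeClosure.
Variables (k : fieldType) (R : comAlgType k) (L : lmodType R).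
Variables (rho : L -> R -> R) (conn : L -> L -> L).
Hypothesis connDr : forall X, {morph conn X : Y Z / Y + Z}.
Hypothesis connZr : forall X f Y, conn X (f *: Y) = rho X f *: Y + f *: conn X Y.

Variable S : (L -> L) -> Prop.
Hypothesis S_morphB : forall u, S u -> {morph u : a b / a - b}.
Hypothesis S_connHom : forall X u, S u -> gen_alg S (connHom conn X u).

Lemma gen_alg_connHom X u : gen_alg S u -> gen_alg S (connHom conn X u).
Proof.
elim=> {u} [u /S_connHom //| | u v _ Su _ Sv | f u gu Su | u v gu Su gv Sv].
- apply: (gen_alg_eq _ (ga_zero _)) => Z.
  have conn0 : conn X 0 = 0 by apply: (addrI (conn X 0)); rewrite -connDr !addr0.
  by rewrite /connHom conn0 subrr.
- apply: (gen_alg_eq _ (ga_add Su Sv)) => Z.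
  by rewrite /connHom connDr opprD addrACA.
- apply: (gen_alg_eq _ (ga_add (ga_scale (rho X f) gu) (ga_scale f Su))) => Z.
  by rewrite /connHom connZr scalerBr addrA.
- apply: (gen_alg_eq _ (ga_add (ga_comp Su gv) (ga_comp gu Sv))) => Z.
  by rewrite /connHom (gen_alg_morphB S_morphB gu) addrA subrK.
Qed.

End CovariantDerivativeClosure.

Section PostLieRinehart.
Variables (k : fieldType) (R : comAlgType k) (L : lmodType R).
Variables (lb : L -> L -> L) (rho : L -> R -> R) (conn : L -> L -> L).
Hypothesis postLie : is_postLieRinehart lb rho conn.

Local Notation "X |> Y" := (conn X Y) (at level 40, left associativity).
Local Notation plbr := (plbr lb conn).
Local Notation delta := (delta conn).
Local Notation delta_tilde := (delta_tilde lb conn).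

Lemma kscaleN1 (X : L) : kscale (-1) X = - X.
Proof. by rewrite /kscale !scaleN1r. Qed.

Lemma lbBl X Y Z : lb (X - Y) Z = lb X Z - lb Y Z.
Proof.
have [[lbl _] _ _ _] := postLie.
by rewrite addrC -kscaleN1 lbl kscaleN1 addrC.
Qed.

Lemma lbBr X Y Z : lb X (Y - Z) = lb X Y - lb X Z.
Proof.
have [[_ [lbr _]] _ _ _] := postLie.
by rewrite addrC -kscaleN1 lbr kscaleN1 addrC.
Qed.

Lemma lbN X Y : lb X Y = - lb Y X.
Proof.
have [[_ [_ [lbxx _]]] _ _ _] := postLie.
have := lbxx (X - Y); rewrite lbBl !lbBr !lbxx !sub0r subr0 => /eqP.
by rewrite -opprD oppr_eq0 addr_eq0 => /eqP.
Qed.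

Lemma connBl X Y Z : (X - Y) |> Z = X |> Z - Y |> Z.
Proof.
have [_ [connl _ _] _ _] := postLie.
by rewrite addrC -scaleN1r connl scaleN1r addrC.
Qed.

Lemma connDr X : {morph conn X : Y Z / Y + Z}.
Proof. by have [_ [_ connr _] _ _] := postLie. Qed.

Lemma connNr X Y : X |> - Y = - (X |> Y).
Proof.
have conn0 : X |> 0 = 0 by apply: (addrI (X |> 0)); rewrite -connDr !addr0.
by apply/eqP; rewrite -addr_eq0 -connDr addNr conn0.
Qed.

Lemma connBr X : {morph conn X : Y Z / Y - Z}.
Proof. by move=> Y Z; rewrite connDr connNr. Qed.

Lemma connZr X f Y : X |> (f *: Y) = rho X f *: Y + f *: (X |> Y).
Proof. by have [_ [_ _ connZ] _ _] := postLie. Qed.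

Lemma conn_flat X Y Z : X |> (Y |> Z) = Y |> (X |> Z) + lb X Y |> Z.
Proof.
have [_ _ flat _] := postLie.
by apply/eqP; rewrite -subr_eq0 opprD addrA; apply/eqP; exact: flat.
Qed.

Lemma conn_plbr X Y Z : X |> plbr Y Z = plbr (X |> Y) Z + plbr Y (X |> Z).
Proof.
by have [_ _ _ torsion_const] := postLie; rewrite connNr torsion_const opprD.
Qed.

Lemma delta_tildeE Y Z : delta_tilde Y Z = Y |> Z - lb Y Z.
Proof.
by rewrite /delta_tilde /plbr /torsion (lbN Z Y) -!addrA opprD addNKr opprD !opprK.
Qed.

Lemma connHom_delta X Y Z :
  connHom conn X (delta Y) Z = delta (X |> Y) Z - delta Y (delta_tilde X Z).
Proof.
by rewrite /connHom /delta delta_tildeE connBl conn_flat opprB addrA addrAC.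
Qed.

Lemma connHom_delta_tilde X Y Z :
  connHom conn X (delta_tilde Y) Z
  = delta_tilde (X |> Y) Z - delta Y (delta_tilde X Z).
Proof.
have := connHom_delta X Y Z; rewrite /connHom /delta_tilde /delta => E.
by rewrite connDr conn_plbr opprD addrACA E [X in _ + X = _]addrC addKr addrAC.
Qed.

Lemma delta_gens_morphB u : delta_gens lb conn u -> {morph u : a b / a - b}.
Proof.
move=> [Y [->|->]] a b; first exact: connBl.
by rewrite !delta_tildeE connBr lbBr !opprB addrACA [RHS]addrACA [- _ - _]addrC.
Qed.

Lemma delta_gens_connHom X u :
  delta_gens lb conn u -> gen_alg (delta_gens lb conn) (connHom conn X u).
Proof.
have delta_gen Y : gen_alg (delta_gens lb conn) (delta Y).
  by apply: ga_gen; exists Y; left.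
have delta_tilde_gen Y : gen_alg (delta_gens lb conn) (delta_tilde Y).
  by apply: ga_gen; exists Y; right.
have delta_comp_gen Y := ga_comp (delta_gen Y) (delta_tilde_gen X).
move=> [Y [->|->]].
- exact: gen_alg_eq (connHom_delta X Y)
    (gen_alg_B (delta_gen _) (delta_comp_gen Y)).
- exact: gen_alg_eq (connHom_delta_tilde X Y)
    (gen_alg_B (delta_tilde_gen _) (delta_comp_gen Y)).
Qed.

Lemma El_gens_delta_gens u : El_gens conn u -> gen_alg (delta_gens lb conn) u.
Proof.
move=> [X [Ys ->]]; elim: Ys => [|Y Ys IHYs] /=.
  by apply: ga_gen; exists X; left.
exact: (gen_alg_connHom connDr connZr delta_gens_morphB delta_gens_connHom Y IHYs).
Qed.

End PostLieRinehart.

Theorem mainTheorem5 (k : fieldType) (R : comAlgType k) (L : lmodType R)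
  (lb : L -> L -> L) (rho : L -> R -> R) (conn : L -> L -> L) :
  is_postLieRinehart lb rho conn ->
  forall u : L -> L, El conn u -> gen_alg (delta_gens lb conn) u.
Proof. by move=> postLie; apply: gen_alg_min; apply: El_gens_delta_gens postLie. Qed.
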